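(* Let $\Delta:M_n\to M_n$ be a weak-2-local derivation which is symmetric (i.e. $\Delta(a^* )^*=\Delta(a)$ for all $a\in M_n$), let $p_1,\ldots,p_n$ be mutually orthogonal minimal projections in $M_n$ and $q=1-p_n$. Suppose $\Delta(qaq)=0$ for every $a\in M_n$ and $\Delta(e_{1n})=0$. Then $\Delta\equiv 0$.
   Context: $M_n=M_n(\mathbb{C})$. For $i,j$, $e_{ij}$ is the unique minimal partial isometry in $M_n$ with $e_{ij}^*e_{ij}=p_j$ and $e_{ij}e_{ij}^*=p_i$. A derivation on $M_n$ is a linear map $D$ with $D(ab)=D(a)b+aD(b)$. A (not necessarily linear) map $\Delta:M_n\to M_n$ is a weak-2-local derivation if for every $a,b\in M_n$ and every $\phi\in M_n^*$ there exists a derivation $D_{a,b,\phi}$ such that $\phi\Delta(a)=\phi D_{a,b,\phi}(a)$ and $\phi\Delta(b)=\phi D_{a,b,\phi}(b)$. *)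

From mathcomp Require Import all_boot all_algebra.
From mathcomp Require Import reals.
From mathcomp.real_closed Require Import complex.
Set Implicit Arguments. Unset Strict Implicit. Unset Printing Implicit Defensive.
Import GRing.Theory Num.Theory.
Local Open Scope ring_scope.

(* M_n(C) is modelled as 'M[R[i]]_n with R : realType (so R[i] is the field
   of complex numbers). *)
Section Defs.
Variables (R : realType) (n : nat).
Local Notation C := (R[i]).
Local Notation M := ('M[C]_n).

Definition adj (a : M) : M := (map_mx Num.conj a)^T.

Definition is_linear_map (f : M -> M) : Prop :=
  forall (c : C) (x y : M), f (c *: x + y) = c *: f x + f y.

Definition is_linear_functional (phi : M -> C) : Prop :=
  forall (c : C) (x y : M), phi (c *: x + y) = c * phi x + phi y.

Definition is_derivation (D : M -> M) : Prop :=
  is_linear_map D /\ forall a b : M, D (a *m b) = D a *m b + a *m D b.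

Definition weak_2_local_derivation (Delta : M -> M) : Prop :=
  forall (a b : M) (phi : M -> C), is_linear_functional phi ->
    exists D : M -> M, is_derivation D /\
      phi (Delta a) = phi (D a) /\ phi (Delta b) = phi (D b).

Definition symmetric_map (Delta : M -> M) : Prop :=
  forall a : M, adj (Delta (adj a)) = Delta a.

Definition is_projection (p : M) : Prop := adj p = p /\ p *m p = p.

(* minimal: nonzero, and every subprojection r <= p (i.e. r p = r) is 0 or p *)
Definition minimal_projection (p : M) : Prop :=
  is_projection p /\ p != 0 /\
  forall r : M, is_projection r -> r *m p = r -> r = 0 \/ r = p.

Definition partial_isometry_from_to (e p_src p_tgt : M) : Prop :=
  adj e *m e = p_src /\ e *m adj e = p_tgt.

End Defs.

(* Through each functional tr(c .), a weak-2-local derivation Delta agrees with a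
   genuine derivation D at any two points. Derivations of M_n have traceless range
   and satisfy tr(x D x) = tr(x^2 D x) = 0; hence every b with Delta b = 0 is
   trace-orthogonal to every value Delta a, and tr((aY + Ya) Delta a) = 0 whenever
   Delta kills -Y and Y^2. Put P = p_n, e = e_1n and r = 1 - p_1 - p_n. Since
   Delta kills (1 - P) M_n (1 - P), e, e^* and 1, and P is rank one, Delta a is
   orthogonal to everything but the corners r M_n P and P M_n r. Taking Y in
   (1 - P) M_n (1 - P) of the form r c P e^* or e c r shows that Delta vanishes on
   e + e^* + r x P + P y r; differences of these fill both corners, so Delta a
   is orthogonal to all of M_n. *)

From mathcomp Require Import all_boot all_algebra.
From mathcomp Require Import reals.
From mathcomp.real_closed Require Import complex.
Set Implicit Arguments. Unset Strict Implicit. Unset Printing Implicit Defensive.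
Import GRing.Theory Num.Theory.
Local Open Scope ring_scope.

Section TraceDuality.
Variables (F : comPzRingType) (n : nat).

Lemma mxtrace_mul_delta (A : 'M[F]_n) i j : \tr (delta_mx j i *m A) = A i j.
Proof.
rewrite /mxtrace (bigD1 j) //= big1 ?addr0.
- rewrite !mxE (bigD1 i) //= big1 ?addr0; first by rewrite mxE !eqxx mul1r.
  by move=> l /negbTE nl; rewrite mxE nl andbF mul0r.
- by move=> k /negbTE nk; rewrite mxE big1 // => l _; rewrite mxE nk /= mul0r.
Qed.

Lemma mxtrace_mul_eq0 (A : 'M[F]_n) : (forall c, \tr (c *m A) = 0) -> A = 0.
Proof. by move=> trA0; apply/matrixP => i j; rewrite mxE -mxtrace_mul_delta. Qed.

Lemma mul_delta_mx_diag (A : 'M[F]_n) j :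
  delta_mx j j *m A *m delta_mx j j = A j j *: delta_mx j j.
Proof.
apply/matrixP => k l; rewrite mxE (bigD1 j) //= big1 ?addr0; last first.
  by move=> m /negbTE nm; rewrite [delta_mx j j m l]mxE nm mulr0.
rewrite mxE (bigD1 j) //= big1 ?addr0; last first.
  by move=> m /negbTE nm; rewrite mxE eq_sym nm andbF mul0r.
rewrite !mxE !eqxx /= andbT.
by case: (k == j); case: (l == j); rewrite ?mulr1 ?mulr0 ?mul0r ?mul1r.
Qed.

End TraceDuality.

Section Adjoint.
Variables (R : realType) (n : nat).
Local Notation C := R[i].
Local Notation M := 'M[C]_n.
Implicit Types x y : M.

Lemma adjE x i j : adj x i j = (x j i)^*.
Proof. by rewrite !mxE. Qed.

Lemma adjK x : adj (adj x) = x.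
Proof. by apply/matrixP => i j; rewrite !adjE conjCK. Qed.

Lemma adjM x y : adj (x *m y) = adj y *m adj x.
Proof. by rewrite /adj map_mxM trmx_mul. Qed.

Lemma adjB x y : adj (x - y) = adj x - adj y.
Proof. by apply/matrixP => i j; rewrite !mxE rmorphB. Qed.

Lemma adjZ (s : C) x : adj (s *: x) = s^* *: adj x.
Proof. by apply/matrixP => i j; rewrite !mxE rmorphM. Qed.

Lemma adj0 : adj (0 : M) = 0.
Proof. by apply/matrixP => i j; rewrite !mxE rmorph0. Qed.

Lemma adj_delta_mx i j : adj (delta_mx i j : M) = delta_mx j i.
Proof. by apply/matrixP => k l; rewrite !mxE eq_sym andbC rmorph_nat. Qed.

Lemma adj_mulmx_diag x j : (adj x *m x) j j = \sum_i `|x i j| ^+ 2.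
Proof. by rewrite mxE; apply: eq_bigr => i _; rewrite adjE mulrC -normCK. Qed.

Lemma adj_mulmx_diag_eq0 x j : (adj x *m x) j j = 0 -> forall i, x i j = 0.
Proof.
rewrite adj_mulmx_diag => /eqP; rewrite psumr_eq0 => [/allP x0 i|i _]; last first.
  exact: exprn_ge0.
by have /implyP/(_ isT) := x0 i (mem_index_enum i); rewrite sqrf_eq0 normr_eq0 => /eqP.
Qed.

Lemma adj_mulmx_eq0 x : adj x *m x = 0 -> x = 0.
Proof.
by move=> x0; apply/matrixP => i j; rewrite mxE (adj_mulmx_diag_eq0 (j := j)) // x0 mxE.
Qed.

Lemma partial_isometry_mulr x : adj x *m x *m (adj x *m x) = adj x *m x ->
  x *m (adj x *m x) = x.
Proof.
set Q := adj x *m x => QQ; have adjQ : adj Q = Q by rewrite /Q adjM adjK.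
apply/eqP; rewrite -subr_eq0; apply/eqP/adj_mulmx_eq0.
rewrite adjB adjM adjQ mulmxBl !mulmxBr !mulmxA -!(mulmxA _ (adj x) x) -/Q !QQ.
by rewrite !subrr.
Qed.

End Adjoint.

Section MinimalProjection.
Variables (R : realType) (n : nat).
Local Notation C := R[i].
Local Notation M := 'M[C]_n.

Lemma projection_diag_neq0 (P : M) : is_projection P -> P != 0 ->
  exists j, P j j != 0.
Proof.
move=> [adjP PP] P0; apply/existsP; apply: contraNT P0 => /existsPn Pdiag0.
have PE : adj P *m P = P by rewrite adjP PP.
apply/eqP/matrixP => i j; rewrite mxE.
by apply: (@adj_mulmx_diag_eq0 R n P j); rewrite PE; apply/eqP/negPn/Pdiag0.
Qed.

(* [P] dominates the rank-one projection [s^-1 P E_jj P], which must be [P] itself. *)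
Lemma minimal_projection_compress (P : M) : minimal_projection P ->
  forall z, exists mu, P *m z *m P = mu *: P.
Proof.
move=> [[adjP PP] [P0 Pmin]] z; have [j s0] := projection_diag_neq0 (conj adjP PP) P0.
set s := P j j in s0; set E := delta_mx j j : M.
have EPE A : E *m A *m E = A j j *: E by exact: mul_delta_mx_diag.
have s_real : s^* = s by rewrite -adjE adjP.
set r := s^-1 *: (P *m E *m P).
have r_proj : is_projection r.
  split.
    by rewrite adjZ !adjM adjP adj_delta_mx fmorphV mulmxA; congr (_^-1 *: _).
  have PEP2 : P *m E *m P *m (P *m E *m P) = s *: (P *m E *m P).
    have -> : s *: (P *m E *m P) = P *m (E *m P *m E) *m P.
      by rewrite EPE -scalemxAr -scalemxAl.
    by rewrite !mulmxA -(mulmxA (P *m E) P P) PP.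
  by rewrite /r -scalemxAl -scalemxAr PEP2 !scalerA divfK.
have rP : r *m P = r by rewrite /r -scalemxAl -(mulmxA _ P P) PP.
have r0 : r != 0.
  apply/eqP => /eqP; rewrite scaler_eq0 invr_eq0 (negPf s0) /= => /eqP PEP0.
  have : E *m (P *m E *m P) *m E = s ^+ 2 *: E.
    by rewrite !mulmxA -(mulmxA _ P E) EPE -scalemxAl mulmxA EPE scalerA.
  rewrite PEP0 mulmx0 mul0mx => /esym/eqP; rewrite scaler_eq0 sqrf_eq0 (negPf s0) /=.
  by move/eqP/matrixP/(_ j j); rewrite !mxE !eqxx => /eqP; rewrite oner_eq0.
have [r_eq0|<-] := Pmin r r_proj rP; first by rewrite r_eq0 eqxx in r0.
exists (s^-1 * (P *m z *m P) j j).
have PEPzPEP : P *m E *m P *m z *m (P *m E *m P) = (P *m z *m P) j j *: (P *m E *m P).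
  by rewrite scalemxAl scalemxAr -EPE !mulmxA.
by rewrite /r -!scalemxAl -scalemxAr PEPzPEP !scalerA mulrAC.
Qed.
End MinimalProjection.

Section TracialFunctional.
Variables (R : realType) (n : nat).
Local Notation C := R[i].
Local Notation M := 'M[C]_n.+1.
Variable phi : M -> C.
Hypotheses (phi_lin : is_linear_functional phi)
  (phi_tracial : forall x y : M, phi (x *m y) = phi (y *m x)).

Let phiD x y : phi (x + y) = phi x + phi y.
Proof. by rewrite -[x in LHS]scale1r phi_lin mul1r. Qed.

Let phi0 : phi 0 = 0.
Proof. by apply: (addrI (phi 0)); rewrite -phiD !addr0. Qed.

Let phiZ c x : phi (c *: x) = c * phi x.
Proof. by rewrite -[c *: x]addr0 phi_lin phi0 addr0. Qed.

Lemma tracial_functionalE x : phi x = \tr x * phi (delta_mx 0 0).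
Proof.
have phi_delta i j : phi (delta_mx i j) = (i == j)%:R * phi (delta_mx 0 0).
  have [<-|nij] := eqVneq i j.
    by rewrite -(mul_delta_mx (0 : 'I_n.+1) i i) phi_tracial mul_delta_mx mul1r.
  by rewrite -(mul_delta_mx j i j) phi_tracial mul_delta_mx_0 1?eq_sym // phi0 mul0r.
rewrite {1}(matrix_sum_delta x) (big_morph phi phiD phi0) /mxtrace mulr_suml.
apply: eq_bigr => i _; rewrite (big_morph phi phiD phi0) (bigD1 i) //= big1 ?addr0.
  by rewrite phiZ phi_delta eqxx mul1r.
by move=> j /negbTE nij; rewrite phiZ phi_delta eq_sym nij mul0r mulr0.
Qed.

End TracialFunctional.

Section Derivation.
Variables (R : realType) (n : nat).
Local Notation C := R[i].
Local Notation M := 'M[C]_n.+1.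
Variable D : M -> M.
Hypothesis D_der : is_derivation D.

Lemma derivationD x y : D (x + y) = D x + D y.
Proof. by have := D_der.1 1 x y; rewrite !scale1r. Qed.

Lemma derivation0 : D 0 = 0.
Proof. by apply: (addrI (D 0)); rewrite -derivationD !addr0. Qed.

Lemma derivationZ c x : D (c *: x) = c *: D x.
Proof. by rewrite -[c *: x]addr0 D_der.1 derivation0 !addr0. Qed.

Lemma derivation1 : D 1 = 0.
Proof.
have := D_der.2 1 1; rewrite !mulmx1 mul1mx => D1.
by apply: (addrI (D 1)); rewrite addr0 -{1}D1.
Qed.

Lemma derivation_scalar_mx c : D c%:M = 0.
Proof. by rewrite -scalemx1 derivationZ derivation1 scaler0. Qed.

(* [x -> \tr (D x)] is tracial, hence a multiple of the trace, and it vanishes at [1]. *)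
Lemma mxtrace_derivation x : \tr (D x) = 0.
Proof.
have trD_lin : is_linear_functional (fun x => \tr (D x)).
  by move=> c y z; rewrite D_der.1 mxtraceD mxtraceZ.
have trD_tracial y z : \tr (D (y *m z)) = \tr (D (z *m y)).
  by rewrite !D_der.2 !mxtraceD addrC !(mxtrace_mulC _ (D _)).
have trD0 : \tr (D (delta_mx 0 0)) = 0.
  have := tracial_functionalE trD_lin trD_tracial 1.
  by rewrite derivation1 mxtrace0 mxtrace1 => /esym/eqP; rewrite mulf_eq0 pnatr_eq0 => /eqP.
by rewrite (tracial_functionalE trD_lin trD_tracial) trD0 mulr0.
Qed.

Lemma mxtrace_mul_derivation x : \tr (x *m D x) = 0.
Proof.
have := mxtrace_derivation (x *m x); rewrite D_der.2 mxtraceD mxtrace_mulC -mulr2n.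
by move/eqP; rewrite mulrn_eq0 => /eqP.
Qed.

Lemma mxtrace_sqr_mul_derivation x : \tr (x *m x *m D x) = 0.
Proof.
have := mxtrace_derivation (x *m (x *m x)).
rewrite D_der.2 (D_der.2 x x) mulmxDr !mxtraceD (mxtrace_mulC (D x)) mulmxA.
rewrite (mxtrace_mulC (x *m D x)) !mulmxA -mulr2n -mulrS.
by move/eqP; rewrite mulrn_eq0 => /eqP.
Qed.

End Derivation.

Section WeakLocalDerivation.
Variables (R : realType) (n : nat).
Local Notation C := R[i].
Local Notation M := 'M[C]_n.+1.
Variable Delta : M -> M.
Hypothesis Delta_w2l : weak_2_local_derivation Delta.

Lemma mxtrace_mul_linear (c : M) : is_linear_functional (fun x => \tr (c *m x)).
Proof. by move=> k x y; rewrite mulmxDr mxtraceD -scalemxAr mxtraceZ. Qed.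

Lemma w2l_mxtrace_sub a b c : Delta b = 0 ->
  exists2 D, is_derivation D & \tr (c *m Delta a) = \tr (c *m D (a - b)).
Proof.
move=> Db0; have [D [D_der [/= Da Db]]] := Delta_w2l a b (mxtrace_mul_linear c).
exists D => //; rewrite Da -{1}(subrK b a) (derivationD D_der (a - b)).
by rewrite mulmxDr mxtraceD -Db Db0 mulmx0 mxtrace0 addr0.
Qed.

Lemma w2l0 : Delta 0 = 0.
Proof.
apply: mxtrace_mul_eq0 => c.
have [D [D_der [/= -> _]]] := Delta_w2l 0 0 (mxtrace_mul_linear c).
by rewrite derivation0 // mulmx0 mxtrace0.
Qed.

Lemma w2l_eq0 a : (forall D, is_derivation D -> D a = 0) -> Delta a = 0.
Proof.
move=> Da0; apply: mxtrace_mul_eq0 => c; have [D D_der ->] := w2l_mxtrace_sub a c w2l0.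
by rewrite subr0 Da0 // mulmx0 mxtrace0.
Qed.

Lemma w2l1 : Delta 1 = 0.
Proof. exact/w2l_eq0/derivation1. Qed.

Lemma w2l_mxtrace_kernel a b : Delta b = 0 -> \tr (b *m Delta a) = 0.
Proof.
move=> Db0; have [D D_der Ea] := w2l_mxtrace_sub a a w2l0.
have [D' D'_der Eab] := w2l_mxtrace_sub a (a - b) Db0.
rewrite subr0 (mxtrace_mul_derivation D_der) in Ea.
rewrite (mxtrace_mul_derivation D'_der) in Eab.
by rewrite -[b](subKr a) mulmxBl linearB /= Ea Eab subr0.
Qed.

Lemma w2l_mxtrace_anticomm a y : Delta (- y) = 0 -> Delta (y *m y) = 0 ->
  \tr ((a *m y + y *m a) *m Delta a) = 0.
Proof.
move=> Dy0 Dyy0.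
have [D D_der Ea] := w2l_mxtrace_sub a (a *m a) w2l0.
have [D' D'_der Eay] := w2l_mxtrace_sub a ((a + y) *m (a + y)) Dy0.
rewrite subr0 (mxtrace_sqr_mul_derivation D_der) in Ea.
rewrite opprK (mxtrace_sqr_mul_derivation D'_der) in Eay.
move: Eay; rewrite mulmxDl !mulmxDr -addrA addrCA !mulmxDl !linearD /=.
by rewrite Ea (w2l_mxtrace_kernel a Dyy0) add0r addr0.
Qed.

End WeakLocalDerivation.

Lemma mulmxA_congr (C : pzRingType) m k l p (u : 'M[C]_(k, l)) (v : 'M[C]_(l, p)) w :
  u *m v = w -> forall X : 'M[C]_(m, k), X *m u *m v = X *m w.
Proof. by move=> uv X; rewrite -mulmxA uv. Qed.

Section Compression.
Variables (R : realType) (n : nat).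
Local Notation C := R[i].
Local Notation M := 'M[C]_n.+1.
(* [q] and [r] are variables with defining equations rather than [Let]s, so that
   rewriting with [mulmxDl] and friends never unfolds them. *)
Variables (Delta : M -> M) (P e q r : M).
Let E := adj e.
Hypotheses (Delta_w2l : weak_2_local_derivation Delta) (P_min : minimal_projection P)
  (Ee : E *m e = P) (PP1 : P *m (e *m E) = 0) (q_def : q = 1 - P) (r_def : r = q - e *m E)
  (Delta_q : forall a, Delta (q *m a *m q) = 0) (De : Delta e = 0) (DE : Delta E = 0).

Let adjP : adj P = P. Proof. by case: P_min => -[]. Qed.
Let PP : P *m P = P. Proof. by case: P_min => -[]. Qed.
Let eP : e *m P = e. Proof. by rewrite -Ee partial_isometry_mulr // Ee PP. Qed.
Let Pe : P *m e = 0.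
Proof.
have eEe : e *m E *m e = e by rewrite -mulmxA Ee eP.
by rewrite -eEe !mulmxA -(mulmxA P e E) PP1 !mul0mx.
Qed.
Let PE : P *m E = E. Proof. by rewrite -adjP -adjM eP. Qed.
Let EP : E *m P = 0. Proof. by rewrite -adjP -adjM Pe adj0. Qed.
Let ee : e *m e = 0. Proof. by rewrite -{1}eP -mulmxA Pe mulmx0. Qed.
Let EE : E *m E = 0. Proof. by rewrite -adjM ee adj0. Qed.
Let qq : q *m q = q.
Proof. by rewrite q_def mulmxBl !mulmxBr !mul1mx mulmx1 PP subrr subr0. Qed.
Let qe : q *m e = e. Proof. by rewrite q_def mulmxBl mul1mx Pe subr0. Qed.
Let Eq : E *m q = E. Proof. by rewrite q_def mulmxBr mulmx1 EP subr0. Qed.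
Let re : r *m e = 0. Proof. by rewrite r_def mulmxBl qe -mulmxA Ee eP subrr. Qed.
Let rE : r *m E = 0.
Proof. by rewrite r_def mulmxBl -mulmxA EE mulmx0 subr0 q_def mulmxBl mul1mx PE subrr. Qed.
Let er : e *m r = 0.
Proof. by rewrite r_def q_def !mulmxBr mulmx1 eP mulmxA ee mul0mx !subrr. Qed.
Let Er : E *m r = 0.
Proof. by rewrite r_def q_def !mulmxBr mulmx1 EP mulmxA Ee PE subr0 subrr. Qed.
Let rP : r *m P = 0.
Proof. by rewrite r_def q_def !mulmxBl mul1mx PP -mulmxA EP mulmx0 !subrr. Qed.
Let Pr : P *m r = 0.
Proof. by rewrite r_def q_def !mulmxBr mulmx1 PP mulmxA Pe mul0mx !subrr. Qed.
Let qr : q *m r = r.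
Proof. by rewrite q_def mulmxBl mul1mx Pr subr0. Qed.
Let rr : r *m r = r.
Proof. by rewrite {1}r_def mulmxBl qr -mulmxA Er mulmx0 subr0. Qed.
Let rq : r *m q = r.
Proof. by rewrite q_def mulmxBr mulmx1 rP subr0. Qed.

Lemma compress_eP z : exists mu, e *m z *m P = mu *: e.
Proof.
have [mu PzP] := minimal_projection_compress P_min z; exists mu.
have -> : e *m z *m P = e *m (P *m z *m P) by rewrite !mulmxA eP.
by rewrite PzP -scalemxAr eP.
Qed.

Lemma compress_PE z : exists mu, P *m z *m E = mu *: E.
Proof.
have [mu PzP] := minimal_projection_compress P_min z; exists mu.
have -> : P *m z *m E = P *m z *m P *m E by rewrite -(mulmxA _ P E) PE.
by rewrite PzP -scalemxAl PE.
Qed.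

Lemma corner_decomposition c : exists mu1 mu2 mu3,
  c = q *m c *m q + (r *m c *m P + mu1 *: e) + (P *m c *m r + mu2 *: E) + mu3 *: P.
Proof.
have [mu1 eEcP] := compress_eP (E *m c); have [mu2 PceE] := compress_PE (c *m e).
have [mu3 PcP] := minimal_projection_compress P_min c.
exists mu1, mu2, mu3; rewrite -eEcP -PceE -PcP.
have q_split : q = r + e *m E by rewrite r_def subrK.
have qcP : q *m c *m P = r *m c *m P + e *m (E *m c) *m P.
  by rewrite q_split !mulmxDl !mulmxA.
have Pcq : P *m c *m q = P *m c *m r + P *m (c *m e) *m E.
  by rewrite q_split !mulmxDr !mulmxA.
have cE : c = (q + P) *m c *m (q + P) by rewrite q_def subrK mul1mx mulmx1.
by rewrite {1}cE !mulmxDl !mulmxDr qcP Pcq !addrA.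
Qed.

Let kernel_orth a b (Db0 : Delta b = 0) : \tr (b *m Delta a) = 0 :=
  w2l_mxtrace_kernel Delta_w2l a Db0.

Lemma w2l_mxtrace_P a : \tr (P *m Delta a) = 0.
Proof.
have -> : P = 1 - q *m 1 *m q by rewrite mulmx1 qq q_def opprB addrC subrK.
rewrite mulmxBl linearB /= (kernel_orth _ (w2l1 Delta_w2l)).
by rewrite (kernel_orth _ (Delta_q 1)) subrr.
Qed.

Lemma w2l_corners_eq0 a : (forall c, \tr (r *m c *m P *m Delta a) = 0) ->
  (forall c, \tr (P *m c *m r *m Delta a) = 0) -> Delta a = 0.
Proof.
move=> rcP0 Pcr0; apply: mxtrace_mul_eq0 => c.
have [mu1 [mu2 [mu3 ->]]] := corner_decomposition c.
rewrite !mulmxDl !linearD /= rcP0 Pcr0 -!scalemxAl !linearZ /= w2l_mxtrace_P.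
by rewrite (kernel_orth _ (Delta_q c)) (kernel_orth _ De) (kernel_orth _ DE) !mulr0 !addr0.
Qed.

Lemma w2l_corner_anticomm a Y : q *m Y *m q = Y ->
  \tr ((a *m Y + Y *m a) *m Delta a) = 0.
Proof.
move=> qYq; have qY : q *m Y = Y by rewrite -qYq !mulmxA qq.
have Yq : Y *m q = Y by rewrite -qYq -mulmxA qq.
apply: w2l_mxtrace_anticomm => //; first by rewrite -qYq -mulNmx -mulmxN Delta_q.
by rewrite -[Y *m Y](_ : q *m (Y *m Y) *m q = _) ?Delta_q // mulmxA qY -mulmxA Yq.
Qed.

Lemma w2l_corner_sum x y : Delta (e + E + r *m x *m P + P *m y *m r) = 0.
Proof.
set a := e + E + r *m x *m P + P *m y *m r.
apply: w2l_corners_eq0 => c.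
- have [mu PyrcPE] := compress_PE (y *m r *m c *m P).
  have aY : a *m (r *m c *m P *m E) + r *m c *m P *m E *m a = r *m c *m P + mu *: E.
    rewrite /a !mulmxDl !mulmxDr !mulmxA er Er (mulmxA_congr Pr) (mulmxA_congr rr).
    rewrite (mulmxA_congr Ee) (mulmxA_congr PP) (mulmxA_congr EE) (mulmxA_congr Er).
    rewrite (mulmxA_congr EP) -PyrcPE !mulmxA.
    by rewrite !(mulmx0, mul0mx) !(add0r, addr0) addrC.
  have qYq : q *m (r *m c *m P *m E) *m q = r *m c *m P *m E.
    by rewrite !mulmxA qr (mulmxA_congr Eq).
  have := w2l_corner_anticomm a qYq; rewrite aY.
  by rewrite mulmxDl linearD /= -scalemxAl linearZ /= (kernel_orth _ DE) mulr0 addr0.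
- have [mu ecrxP] := compress_eP (c *m r *m x).
  have aY : a *m (e *m c *m r) + e *m c *m r *m a = P *m c *m r + mu *: e.
    rewrite /a !mulmxDl !mulmxDr !mulmxA ee Ee (mulmxA_congr Pe) !(mulmxA_congr re).
    rewrite (mulmxA_congr rE) (mulmxA_congr rr) (mulmxA_congr rP) -ecrxP !mulmxA.
    by rewrite !(mulmx0, mul0mx) !(add0r, addr0).
  have qYq : q *m (e *m c *m r) *m q = e *m c *m r by rewrite !mulmxA qe (mulmxA_congr rq).
  have := w2l_corner_anticomm a qYq; rewrite aY.
  by rewrite mulmxDl linearD /= -scalemxAl linearZ /= (kernel_orth _ De) mulr0 addr0.
Qed.

Lemma w2l_compression_eq0 a : Delta a = 0.
Proof.
have corner_orth x y : \tr ((r *m x *m P + P *m y *m r) *m Delta a) = 0.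
  have -> : r *m x *m P + P *m y *m r =
      (e + E + r *m x *m P + P *m y *m r) - (e + E + r *m 0 *m P + P *m 0 *m r).
    by rewrite !(mulmx0, mul0mx) !addr0 -(addrA (e + E)) [RHS]addrC addKr.
  by rewrite mulmxBl linearB /= !(kernel_orth _ (w2l_corner_sum _ _)) subrr.
apply: w2l_corners_eq0 => c.
- by have := corner_orth c 0; rewrite mulmx0 mul0mx addr0.
- by have := corner_orth 0 c; rewrite mulmx0 mul0mx add0r.
Qed.

End Compression.

Lemma w2l_dim1_eq0 (R : realType) (Delta : 'M[R[i]]_1 -> 'M[R[i]]_1) :
  weak_2_local_derivation Delta -> forall a, Delta a = 0.
Proof.
move=> Delta_w2l a; rewrite [a]mx11_scalar.
by apply: (w2l_eq0 Delta_w2l) => D D_der; exact: derivation_scalar_mx.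
Qed.

Theorem lemma2p9 (R : realType) (n : nat)
  (Delta : 'M[R[i]]_n.+1 -> 'M[R[i]]_n.+1)
  (p : 'I_n.+1 -> 'M[R[i]]_n.+1) (e1n : 'M[R[i]]_n.+1) :
  weak_2_local_derivation Delta ->
  symmetric_map Delta ->
  (forall k, minimal_projection (p k)) ->
  (forall k l, k != l -> p k *m p l = 0) ->
  partial_isometry_from_to e1n (p ord_max) (p ord0) ->
  (forall a, Delta ((1 - p ord_max) *m a *m (1 - p ord_max)) = 0) ->
  Delta e1n = 0 ->
  forall a, Delta a = 0.
Proof.
move=> Delta_w2l Delta_sym p_min p_orth [Ee eE] Delta_q De.
have [n0|n_gt0] := posnP n; first by subst n; exact: w2l_dim1_eq0.
have max_neq0 : ord_max != ord0 :> 'I_n.+1 by rewrite -val_eqE /= -lt0n.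
have PP1 : p ord_max *m (e1n *m adj e1n) = 0 by rewrite eE (p_orth _ _ max_neq0).
have DE : Delta (adj e1n) = 0 by rewrite -Delta_sym adjK De adj0.
exact: (w2l_compression_eq0 Delta_w2l (p_min ord_max) Ee PP1 erefl erefl Delta_q De DE).
Qed.
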